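(* Consider a hierarchical tensor factorization with mode tree $\mathcal T$ whose weight matrices evolve under gradient flow on $\phi_H$ for $t\ge0$, and assume the unbalancedness magnitude at initialization is $\epsilon\ge0$. Let $L_\nu:=|C(\nu)|+1$. Then for any $\nu\in\mathrm{int}(\mathcal T)$, $r\in[R_\nu]$ and time $t\ge0$ at which $\sigma_{\nu,r}(t)>0$, writing $g(t):=\langle-\nabla\mathcal L_H(\mathcal W_H(t)),\mathcal E_{\nu,r}(t)\rangle$: if $g(t)\ge0$ then $$\frac{\sigma_{\nu,r}(t)^2}{\sigma_{\nu,r}(t)^{2/L_\nu}+\epsilon}\,L_\nu\, g(t)\;\le\;\frac{d}{dt}\sigma_{\nu,r}(t)\;\le\;\big(\sigma_{\nu,r}(t)^{2/L_\nu}+\epsilon\big)^{L_\nu-1}L_\nu\, g(t);$$ and if $g(t)<0$ then $$\big(\sigma_{\nu,r}(t)^{2/L_\nu}+\epsilon\big)^{L_\nu-1}L_\nu\, g(t)\;\le\;\frac{d}{dt}\sigma_{\nu,r}(t)\;\le\;\frac{\sigma_{\nu,r}(t)^2}{\sigma_{\nu,r}(t)^{2/L_\nu}+\epsilon}\,L_\nu\, g(t).$$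
   Context: Fix $N\in\mathbb N$, $D_1,\dots,D_N\in\mathbb N$; $[K]:=\{1,\dots,K\}$. Norms are Frobenius norms, $\langle\cdot,\cdot\rangle$ the entrywise inner product, $\otimes$ the tensor product. A mode tree $\mathcal T$ over $[N]$ is a rooted tree whose nodes are labeled by subsets of $[N]$, with exactly $N$ leaves labeled $\{1\},\dots,\{N\}$, and where each interior node's label is the union of its children's labels; nodes are identified with labels, root $[N]$, $\mathrm{int}(\mathcal T)$ interior nodes, $Pa(\nu)$ parent, $C(\nu)$ children (fixed order). A hierarchical tensor factorization is given by $R_\nu\in\mathbb N$ ($\nu\in\mathrm{int}(\mathcal T)$), with $R_{Pa([N])}:=1$, $R_{\{n\}}:=D_n$, and weight matrices $W^{(\nu)}\in\mathbb R^{R_\nu\times R_{Pa(\nu)}}$. Intermediate tensors: $\mathcal W^{(\{n\},r)}:=W^{(\{n\})}_{:,r}$; for $\nu\in\mathrm{int}(\mathcal T)\setminus\{[N]\}$ (leaves to root), $r\in[R_{Pa(\nu)}]$: $\mathcal W^{(\nu,r)}:=\pi_\nu\big(\sum_{r'=1}^{R_\nu}W^{(\nu)}_{r',r}\bigotimes_{\nu_c\in C(\nu)}\mathcal W^{(\nu_c,r')}\big)$; end tensor $\mathcal W_H:=\pi_{[N]}\big(\sum_{r'=1}^{R_{[N]}}W^{([N])}_{r',1}\bigotimes_{\nu_c\in C([N])}\mathcal W^{(\nu_c,r')}\big)$, where $\pi_\nu$ permutes modes (ordered by children, each child's elements ascending) into ascending order of the elements of $\nu$. $\mathrm{LC}(\nu,r)$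 is the collection of vectors $W^{(\nu)}_{r,:}$ and $W^{(\nu_c)}_{:,r}$, $\nu_c\in C(\nu)$; $\sigma_{\nu,r}:=\prod_{w\in\mathrm{LC}(\nu,r)}\|w\|$ is the norm of the local component $W^{(\nu)}_{r,:}\otimes\bigotimes_{\nu_c}W^{(\nu_c)}_{:,r}$. $\mathcal E_{\nu,r}$ is the end tensor obtained from the same construction except that, for every $r'\in[R_{Pa(\nu)}]$, the tensor produced at node $\nu$ (the end tensor itself if $\nu=[N]$) is replaced by $\pi_\nu\big(\sigma_{\nu,r}^{-1}W^{(\nu)}_{r,r'}\bigotimes_{\nu_c\in C(\nu)}\mathcal W^{(\nu_c,r)}\big)$; $\mathcal E_{\nu,r}:=0$ if $\sigma_{\nu,r}=0$. $\mathcal L_H:\mathbb R^{D_1\times\cdots\times D_N}\to\mathbb R_{\ge0}$ is differentiable and locally smooth, $\phi_H((W^{(\nu)})_\nu):=\mathcal L_H(\mathcal W_H)$, gradient flow: $\frac{d}{dt}W^{(\nu)}(t)=-\frac{\partial}{\partial W^{(\nu)}}\phi_H((W^{(\nu')}(t))_{\nu'})$, $t\ge0$; time-$t$ quantities are computed from the weights at time $t$. The unbalancedness magnitude is $\max_{\nu\in\mathrm{int}(\mathcal T),r\in[R_\nu],w,w'\in\mathrm{LC}(\nu,r)}|\|w\|^2-\|w'\|^2|$. *)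

From HB Require Import structures.
From mathcomp Require Import all_boot all_order all_algebra.
From mathcomp Require Import reals exp.
Set Implicit Arguments. Unset Strict Implicit. Unset Printing Implicit Defensive.
Import Order.TTheory GRing.Theory Num.Theory.
Local Open Scope ring_scope.

Section HTF.
Variables (R : realType) (N : nat) (D : 'I_N -> nat).

(* a multi-index (i_1,...,i_N) with i_n in [D_n] (0-based) *)
Definition Idx := {dffun forall n : 'I_N, 'I_(D n)}.
Definition tensor := Idx -> R.
Definition tdot (X Y : tensor) : R := \sum_(i : Idx) X i * Y i.
Definition tnorm (X : tensor) : R := Num.sqrt (tdot X X).
Definition tadd (X Y : tensor) : tensor := fun i => X i + Y i.
Definition tsub (X Y : tensor) : tensor := fun i => X i - Y i.
Definition topp (X : tensor) : tensor := fun i => - X i.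

Definition is_gradient (L : tensor -> R) (G : tensor -> tensor) : Prop :=
  forall X e, 0 < e -> exists2 d, 0 < d &
    forall V, tnorm V < d -> `|L (tadd X V) - L X - tdot (G X) V| <= e * tnorm V.

Definition locally_lipschitz (G : tensor -> tensor) : Prop :=
  forall X, exists d K, 0 < d /\
    forall Y Z, tnorm (tsub Y X) < d -> tnorm (tsub Z X) < d ->
      tnorm (tsub (G Y) (G Z)) <= K * tnorm (tsub Y Z).

Definition has_deriv (f : R -> R) (t l : R) : Prop :=
  forall e, 0 < e -> exists2 d, 0 < d &
    forall h, h != 0 -> `|h| < d -> `|(f (t + h) - f t) / h - l| <= e.
Definition has_deriv_nonneg (f : R -> R) (t l : R) : Prop :=
  forall e, 0 < e -> exists2 d, 0 < d &
    forall h, h != 0 -> `|h| < d -> 0 <= t + h -> `|(f (t + h) - f t) / h - l| <= e.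

(* A mode tree over [N] whose nodes are identified with their labels is
   encoded by its set of labels T: it contains [N] and all singletons, not the
   empty set, and is laminar.  Parent = smallest strict superset in T,
   children = maximal strict subsets in T, leaves = singletons. *)
Definition is_mode_tree (T : {set {set 'I_N}}) : Prop :=
  [/\ setT \in T, (forall n, [set n] \in T), set0 \notin T &
      forall A B, A \in T -> B \in T ->
        [|| A \subset B, B \subset A | [disjoint A & B]]].

Variables (T : {set {set 'I_N}}) (Rk : {set 'I_N} -> nat).

Definition leaf_of (nu : {set 'I_N}) : option 'I_N := [pick n | nu == [set n]].
Definition interior (nu : {set 'I_N}) : bool := (nu \in T) && (1 < #|nu|)%N.
Definition children (nu : {set 'I_N}) : {set {set 'I_N}} :=
  [set c in T | (c \proper nu) && [forall c' in T, (c \proper c') ==> ~~ (c' \proper nu)]].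
Definition parent (nu : {set 'I_N}) : option {set 'I_N} :=
  [pick mu in T | (nu \proper mu) && [forall mu' in T, (nu \proper mu') ==> (mu \subset mu')]].

(* R_nu, with R_{n} := D_n for leaves and R_{Pa([N])} := 1 *)
Definition rk (nu : {set 'I_N}) : nat :=
  if leaf_of nu is Some n then D n else Rk nu.
Definition rkP (nu : {set 'I_N}) : nat :=
  if parent nu is Some mu then rk mu else 1.

(* weight matrices W^(nu) in R^{R_nu x R_{Pa(nu)}} (values at non-nodes are unused) *)
Definition Weights := forall nu : {set 'I_N}, 'M[R]_(rk nu, rkP nu).

(* entry (i,j) (0-based) of a matrix, 0 when out of range *)
Definition mx_at m n (A : 'M[R]_(m, n)) (i j : nat) : R :=
  match @insub _ (fun k => (k < m)%N) 'I_m i, @insub _ (fun k => (k < n)%N) 'I_n j with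
  | Some i', Some j' => A i' j'
  | _, _ => 0
  end.

Variable W : Weights.

Definition row_norm (nu : {set 'I_N}) (r : nat) : R :=
  Num.sqrt (\sum_(j < rkP nu) mx_at (W nu) r j ^+ 2).
Definition col_norm (nu : {set 'I_N}) (r : nat) : R :=
  Num.sqrt (\sum_(i < rk nu) mx_at (W nu) i r ^+ 2).

Definition sigma (nu : {set 'I_N}) (r : nat) : R :=
  row_norm nu r * \prod_(c in children nu) col_norm c r.

(* Intermediate tensors W^(nu,r), evaluated at a full multi-index i (they
   only depend on the coordinates in nu).  The tensor product over the
   children followed by pi_nu evaluates at i to the product of the children
   tensors at i.  [ov = Some (nu0, r0)] performs the replacement defining
   E_{nu0,r0}.  [k] is a fuel (the tree has depth < N). *)
Fixpoint tens (ov : option ({set 'I_N} * nat)) (k : nat) (nu : {set 'I_N})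
    (r : nat) (i : Idx) : R :=
  match k with
  | 0 => 0
  | k'.+1 =>
    if leaf_of nu is Some n then mx_at (W nu) (i n) r else
    let std := \sum_(r' < rk nu)
                 mx_at (W nu) r' r * \prod_(c in children nu) tens ov k' c r' i in
    match ov with
    | Some (nu0, r0) =>
        if nu == nu0 then
          (if sigma nu0 r0 == 0 then 0 else
           (sigma nu0 r0)^-1 * mx_at (W nu) r0 r * \prod_(c in children nu) tens ov k' c r0 i)
        else std
    | None => std
    end
  end.

Definition endT : tensor := fun i => tens None N.+1 setT 0 i.

Definition Etens (nu : {set 'I_N}) (r : nat) : tensor := fun i =>
  if sigma nu r == 0 then 0 else tens (Some (nu, r)) N.+1 setT 0 i.

Definition lc_sqnorms (nu : {set 'I_N}) (r : nat) : seq R :=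
  row_norm nu r ^+ 2 :: [seq col_norm c r ^+ 2 | c <- enum (children nu)].
Definition unbalancedness : R :=
  \big[Num.max/0]_(nu | interior nu) \big[Num.max/0]_(r < rk nu)
    \big[Num.max/0]_(a <- lc_sqnorms nu r) \big[Num.max/0]_(b <- lc_sqnorms nu r)
      `|a - b|.

End HTF.

Definition bump (R : realType) N (D : 'I_N -> nat) T Rk
    (W : Weights R D T Rk) (nu0 : {set 'I_N}) (i0 j0 : nat) (s : R)
    : Weights R D T Rk :=
  fun mu => W mu + s *: \matrix_(a, b)
    (((mu == nu0) && (a == i0 :> nat) && (b == j0 :> nat))%:R : R).

Definition phiH (R : realType) N (D : 'I_N -> nat) T Rk (L : tensor R D -> R)
    (W : Weights R D T Rk) : R := L (endT W).

(* gradient flow on phi_H for t >= 0: each entry of each W^(nu) has time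
   derivative (relative to [0,+oo)) equal to minus the partial derivative of
   phi_H with respect to that entry *)
Definition gradient_flow (R : realType) N (D : 'I_N -> nat) T Rk
    (L : tensor R D -> R) (W : R -> Weights R D T Rk) : Prop :=
  forall t, 0 <= t -> forall nu, nu \in T ->
    forall (i : 'I_(rk D Rk nu)) (j : 'I_(rkP D T Rk nu)),
      exists d, has_deriv (fun s => phiH L (bump (W t) nu i j s)) 0 d /\
                has_deriv_nonneg (fun s => W s nu i j) t (- d).

(* The squared norm of every vector in LC(nu, r) has time derivative
   2 <-grad L_H(W_H), sigma_{nu,r} E_{nu,r}>: the end tensor is affine in each weight
   entry, and the entries of any one of these vectors, weighted by their values, add up
   to the local component sigma_{nu,r} E_{nu,r}.  Hence the pairwise differences of the
   squared norms are conserved and stay within eps, and sigma_{nu,r}, the product of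
   their square roots, satisfies sigma' = sigma^2 g S with S the sum of their inverses.
   Since the L_nu squared norms multiply to sigma^2, the smallest one is at most the
   geometric mean sigma^(2/L_nu), so all of them are at most sigma^(2/L_nu) + eps; this
   gives L_nu / (sigma^(2/L_nu) + eps) <= S and
   sigma^2 S <= L_nu (sigma^(2/L_nu) + eps)^(L_nu - 1). *)

From Pilot Require Import Defs.
From HB Require Import structures.
From mathcomp Require Import all_boot all_order all_algebra.
From mathcomp Require Import reals exp.
From mathcomp Require classical_sets boolp.
From mathcomp Require Import ring lra.
Import Order.TTheory GRing.Theory Num.Theory.
Local Open Scope ring_scope.
Set Implicit Arguments. Unset Strict Implicit. Unset Printing Implicit Defensive.

Section DerivNonneg.
Variable R : realType.
Implicit Types (f g : R -> R) (t a b : R).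

Definition diff_nonneg f t a := forall e, 0 < e -> exists2 d, 0 < d &
  forall h, `|h| < d -> 0 <= t + h -> `|f (t + h) - f t - a * h| <= e * `|h|.

Lemma diff_nonnegP f t a : diff_nonneg f t a <-> has_deriv_nonneg f t a.
Proof.
have E h : h != 0 -> f (t + h) - f t - a * h = ((f (t + h) - f t) / h - a) * h.
  by move=> h0; rewrite mulrBl divfK.
split=> fa e /fa[d d0 fd]; exists d => // h.
- move=> h0 hd th; have hp : 0 < `|h| by rewrite normr_gt0.
  by rewrite -(ler_pM2r hp) -normrM -E // (fd h hd th).
- have [->|h0] := eqVneq h 0; first by rewrite addr0 subrr mulr0 subr0 normr0 mulr0.
  by move=> hd th; rewrite E // normrM ler_wpM2r // (fd h h0 hd th).
Qed.

Lemma diff_nonneg_eq f g t a b : (forall u, f u = g u) -> a = b ->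
  diff_nonneg f t a -> diff_nonneg g t b.
Proof. by move=> fg <-; have -> : f = g by apply: boolp.funext. Qed.

Lemma diff_nonneg_cst c t : diff_nonneg (fun _ => c) t 0.
Proof.
move=> e e0; exists 1 => // h _ _.
by rewrite subrr mul0r subr0 normr0 mulr_ge0 // ltW.
Qed.

Lemma diff_nonnegD f g t a b : diff_nonneg f t a -> diff_nonneg g t b ->
  diff_nonneg (fun u => f u + g u) t (a + b).
Proof.
move=> fa gb e e0; have e2 : 0 < e / 2 by rewrite divr_gt0.
have [d1 d10 f1] := fa _ e2; have [d2 d20 g2] := gb _ e2.
exists (Num.min d1 d2) => [|h]; first by rewrite lt_min d10 d20.
rewrite lt_min => /andP[h1 h2] th.
have -> : f (t + h) + g (t + h) - (f t + g t) - (a + b) * h =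
  (f (t + h) - f t - a * h) + (g (t + h) - g t - b * h) by ring.
apply: le_trans (ler_normD _ _) _.
by rewrite (splitr e) [in X in _ <= X]mulrDl lerD ?f1 ?g2.
Qed.

Lemma diff_nonnegZ c f t a : diff_nonneg f t a ->
  diff_nonneg (fun u => c * f u) t (c * a).
Proof.
move=> fa e e0; have ec : 0 < e / (`|c| + 1) by rewrite divr_gt0 // ltr_wpDl.
have [d d0 fd] := fa _ ec; exists d => // h hd th.
have -> : c * f (t + h) - c * f t - c * a * h = c * (f (t + h) - f t - a * h).
  by ring.
rewrite normrM; apply: le_trans (ler_wpM2l (normr_ge0 c) (fd h hd th)) _.
rewrite mulrA ler_wpM2r // mulrA ler_pdivrMr ?ltr_wpDl //.
by have := normr_ge0 c; nra.
Qed.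

Lemma diff_nonnegN f t a : diff_nonneg f t a ->
  diff_nonneg (fun u => - f u) t (- a).
Proof.
by move/(diff_nonnegZ (-1)); apply: diff_nonneg_eq => [u|]; rewrite mulN1r.
Qed.

Lemma diff_nonnegB f g t a b : diff_nonneg f t a -> diff_nonneg g t b ->
  diff_nonneg (fun u => f u - g u) t (a - b).
Proof. by move=> fa /diff_nonnegN; apply: diff_nonnegD. Qed.

Lemma diff_nonneg_lipschitz f t a : diff_nonneg f t a -> exists2 d, 0 < d &
  forall h, `|h| < d -> 0 <= t + h -> `|f (t + h) - f t| <= (`|a| + 1) * `|h|.
Proof.
move=> /(_ 1 ltr01)[d d0 fd]; exists d => // h hd th.
have -> : f (t + h) - f t = (f (t + h) - f t - a * h) + a * h by ring.
apply: le_trans (ler_normD _ _) _.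
by rewrite normrM mulrDl mul1r addrC lerD // -(mul1r `|h|) fd.
Qed.

Lemma diff_nonneg_sqr f t a : diff_nonneg f t a ->
  diff_nonneg (fun u => f u ^+ 2) t (2 * f t * a).
Proof.
move=> fa e e0.
pose M := `|f t| + 1; pose B := `|a| + 1.
have M0 : 0 < M by rewrite ltr_wpDl.
have B0 : 0 < B by rewrite ltr_wpDl.
have e1 : 0 < e / (4 * M) by rewrite divr_gt0 // mulr_gt0.
have e3 : 0 < e / (2 * B ^+ 2) by rewrite divr_gt0 // mulr_gt0 // exprn_gt0.
have [d1 d10 f1] := fa _ e1.
have [d2 d20 f2] := diff_nonneg_lipschitz fa.
exists (Num.min d1 (Num.min d2 (e / (2 * B ^+ 2)))); first by rewrite !lt_min d10 d20 e3.
move=> h; rewrite !lt_min => /and3P[h1 h2 h3] th.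
have -> : f (t + h) ^+ 2 - f t ^+ 2 - 2 * f t * a * h =
  (f (t + h) - f t) ^+ 2 + 2 * f t * (f (t + h) - f t - a * h) by ring.
apply: le_trans (ler_normD _ _) _; rewrite (splitr e) [in X in _ <= X]mulrDl.
have hB : B ^+ 2 * `|h| <= e / 2.
  by rewrite mulrC -ler_pdivlMr ?exprn_gt0 // -mulrA -invfM ltW.
apply: lerD.
  rewrite normrX; apply: le_trans (_ : (B * `|h|) ^+ 2 <= _).
    by rewrite lerXn2r ?nnegrE ?mulr_ge0 ?(ltW B0) // f2.
  by rewrite exprMn expr2 mulrA ler_wpM2r.
rewrite normrM; apply: le_trans (ler_wpM2l (normr_ge0 _) (f1 h h1 th)) _.
rewrite mulrA ler_wpM2r // normrM ger0_norm // mulrCA mulrA ler_pdivrMr ?mulr_gt0 //.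
by rewrite /M; nra.
Qed.

Lemma diff_nonnegM f g t a b : diff_nonneg f t a -> diff_nonneg g t b ->
  diff_nonneg (fun u => f u * g u) t (f t * b + g t * a).
Proof.
(* polarization: [4 f g = (f + g)^2 - (f - g)^2] *)
move=> fa gb.
have := diff_nonnegZ 4^-1 (diff_nonnegB (diff_nonneg_sqr (diff_nonnegD fa gb))
                                        (diff_nonneg_sqr (diff_nonnegB fa gb))).
by apply: diff_nonneg_eq => [u|]; field.
Qed.

Lemma diff_nonneg_sum (I : Type) (s : seq I) (F : I -> R -> R) (A : I -> R) t :
  (forall i, diff_nonneg (F i) t (A i)) ->
  diff_nonneg (fun u => \sum_(i <- s) F i u) t (\sum_(i <- s) A i).
Proof.
move=> FA; elim: s => [|x s IH].
  by apply: diff_nonneg_eq (diff_nonneg_cst 0 t) => [u|]; rewrite !big_nil.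
by apply: diff_nonneg_eq (diff_nonnegD (FA x) IH) => [u|]; rewrite !big_cons.
Qed.

Lemma diff_nonneg_sqrt f t a : 0 < f t -> diff_nonneg f t a ->
  diff_nonneg (fun u => Num.sqrt (f u)) t (a / (2 * Num.sqrt (f t))).
Proof.
move=> ft0 fa e e0.
pose s0 := Num.sqrt (f t); pose B := `|a| + 1.
have s00 : 0 < s0 by rewrite sqrtr_gt0.
have B0 : 0 < B by rewrite ltr_wpDl.
have [d1 d10 f1] := fa _ (mulr_gt0 e0 s00).
have [d2 d20 f2] := diff_nonneg_lipschitz fa.
have d30 : 0 < f t / B by rewrite divr_gt0.
have d40 : 0 < e * s0 ^+ 3 / B ^+ 2 by rewrite divr_gt0 ?mulr_gt0 ?exprn_gt0.
exists (Num.min (Num.min d1 d2) (Num.min (f t / B) (e * s0 ^+ 3 / B ^+ 2))).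
  by rewrite !lt_min d10 d20 d30 d40.
move=> h; rewrite !lt_min => /andP[/andP[h1 h2] /andP[h3 h4]] th.
have hB : `|f (t + h) - f t| <= B * `|h| := f2 h h2 th.
pose s1 := Num.sqrt (f (t + h)).
have fth0 : 0 < f (t + h).
  have : `|f (t + h) - f t| < f t by apply: le_lt_trans hB _; rewrite mulrC -ltr_pdivlMr.
  by rewrite ltr_norml => /andP[+ _]; lra.
have s10 : 0 <= s1 by exact: sqrtr_ge0.
have Ef1 : f (t + h) = s1 ^+ 2 by rewrite sqr_sqrtr // ltW.
have Ef0 : f t = s0 ^+ 2 by rewrite sqr_sqrtr // ltW.
(* rationalize: [s1 - s0 = (f (t + h) - f t) / (s1 + s0)] *)
have -> : s1 - s0 - a / (2 * s0) * h =
    (f (t + h) - f t - a * h) / (2 * s0)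
    - (f (t + h) - f t) ^+ 2 / (2 * s0 * (s1 + s0) ^+ 2).
  by rewrite Ef1 Ef0; field; rewrite !gt_eqF // ltr_wpDl.
apply: le_trans (ler_normB _ _) _.
rewrite (splitr e) [in X in _ <= X]mulrDl; apply: lerD.
  rewrite normrM normfV normrM (ger0_norm (ltW s00)) (ger0_norm (ler0n _ 2)).
  rewrite ler_pdivrMr ?mulr_gt0 //; apply: le_trans (f1 h h1 th) _.
  by rewrite [X in _ <= X](_ : _ = e * s0 * `|h|) //; field.
have D2 : (f (t + h) - f t) ^+ 2 <= B ^+ 2 * `|h| ^+ 2.
  rewrite -exprMn -real_normK ?num_real //.
  by rewrite lerXn2r ?nnegrE ?mulr_ge0 ?(ltW B0).
have hB3 : `|h| * B ^+ 2 <= e * s0 ^+ 3 by rewrite -ler_pdivlMr ?exprn_gt0 // ltW.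
have s03 : 0 < 2 * s0 ^+ 3 by rewrite mulr_gt0 // exprn_gt0.
rewrite ger0_norm; last by rewrite divr_ge0 ?sqr_ge0 // mulr_ge0 ?sqr_ge0 // mulr_ge0 // ltW.
apply: (@le_trans _ _ ((f (t + h) - f t) ^+ 2 / (2 * s0 ^+ 3))).
  rewrite ler_wpM2l ?sqr_ge0 // lef_pV2 ?posrE ?mulr_gt0 ?exprn_gt0 ?ltr_wpDl //.
  have : s0 ^+ 2 <= (s1 + s0) ^+ 2 by rewrite lerXn2r ?nnegrE ?addr_ge0 ?(ltW s00) //; lra.
  by rewrite [_ ^+ 3]exprS mulrA; move: (mulr_gt0 (ltr0Sn _ 1) s00); nra.
rewrite ler_pdivrMr //; have := ler_wpM2l (normr_ge0 h) hB3.
by move: D2; rewrite expr2 exprS expr2; nra.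
Qed.

Lemma diff_nonneg_prod_sqrt (I : eqType) (s : seq I) (q : I -> R -> R) t c :
  {in s, forall i, 0 < q i t /\ diff_nonneg (q i) t (2 * c)} ->
  diff_nonneg (fun u => \prod_(i <- s) Num.sqrt (q i u)) t
    ((\prod_(i <- s) Num.sqrt (q i t)) * c * \sum_(i <- s) (q i t)^-1).
Proof.
elim: s => [_|x s IH qs].
  by apply: diff_nonneg_eq (diff_nonneg_cst 1 t) => [u|]; rewrite !big_nil ?mulr0.
have [qx0 qx] := qs x (mem_head _ _).
have := diff_nonnegM (diff_nonneg_sqrt qx0 qx)
                     (IH (fun i si => qs i (mem_behead (s := x :: s) si))).
apply: diff_nonneg_eq => [u|]; first by rewrite big_cons.
have sx0 : Num.sqrt (q x t) != 0 by rewrite gt_eqF ?sqrtr_gt0.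
have sx : Num.sqrt (q x t) ^+ 2 = q x t by rewrite sqr_sqrtr ?ltW.
rewrite !big_cons; move: sx0 sx; set sq := Num.sqrt (q x t) => sx0 <-.
by field.
Qed.

Section ZeroDerivative.
Variables (f : R -> R) (t e : R).
Hypotheses (t0 : 0 <= t) (e0 : 0 < e) (f0 : forall u, 0 <= u <= t -> diff_nonneg f u 0).

Let P x := forall y, 0 <= y -> y <= x -> `|f y - f 0| <= e * y.
Let A : classical_sets.set R := fun x => [/\ 0 <= x, x <= t & P x].
Let c := reals.sup A.

Let A0 : A 0.
Proof.
split => // y y0 y1; have -> : y = 0 by apply: le_anti; rewrite y0 y1.
by rewrite subrr normr0 mulr0.
Qed.

Let A_sup : classical_sets.has_sup A.
Proof. by split; [exists 0 | exists t => x []]. Qed.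

Let c_ge0 : 0 <= c.
Proof. exact: sup_upper_bound. Qed.

Let c_le_t : c <= t.
Proof. by apply: ge_sup => [|x []]; first exists 0. Qed.

Let near_c : exists2 d, 0 < d &
  forall y, 0 <= y -> `|y - c| < d -> `|f y - f c| <= e * `|y - c|.
Proof.
have [d d0 fd] := f0 (introT andP (conj c_ge0 c_le_t)) e0; exists d => // y y0 yd.
by have := fd _ yd; rewrite subrKC mul0r subr0; apply.
Qed.

Let P_c : P c.
Proof.
have [d d0 fd] := near_c.
move=> y y0; rewrite le_eqVlt => /orP[/eqP ->|yc]; last first.
  have cy0 : 0 < c - y by rewrite subr_gt0.
  have [x [x0 xt Px] cx] := sup_adherent cy0 A_sup.
  by apply: Px => //; rewrite -/c in cx; lra.
have [->|cp] := eqVneq c 0; first by rewrite subrr normr0 mulr0.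
have m0 : 0 < Num.min (d / 2) c by rewrite lt_min divr_gt0 // lt_def cp c_ge0.
have [x [x0 xt Px] cx] := sup_adherent m0 A_sup.
have xc : x <= c by apply: sup_upper_bound.
have -> : f c - f 0 = (f c - f x) + (f x - f 0) by ring.
apply: le_trans (ler_normD _ _) _.
have -> : e * c = e * (c - x) + e * x by ring.
rewrite lerD ?Px // -[c - x]ger0_norm ?subr_ge0 // distrC [`|c - x|]distrC.
rewrite fd // distrC ger0_norm ?subr_ge0 //.
have : Num.min (d / 2) c <= d / 2 by rewrite ge_min lexx.
by rewrite -/c in cx; lra.
Qed.

Let c_eq_t : c = t.
Proof.
have [d d0 fd] := near_c.
apply/eqP; rewrite eq_le c_le_t leNgt; apply/negP => ct.
pose u := Num.min (d / 2) (t - c).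
have u0 : 0 < u by rewrite lt_min divr_gt0 // subr_gt0.
have : A (c + u).
  split; [by have := c_ge0; lra | by rewrite -lerBrDl ge_min lexx orbT |] => y y0 yu.
  have [yc|cy] := lerP y c; first exact: P_c.
  have -> : f y - f 0 = (f y - f c) + (f c - f 0) by ring.
  apply: le_trans (ler_normD _ _) _.
  have -> : e * y = e * (y - c) + e * c by ring.
  have yc0 : 0 <= y - c by rewrite subr_ge0 ltW.
  rewrite lerD ?P_c // -[y - c]ger0_norm // fd // ger0_norm //.
  have : u <= d / 2 by rewrite ge_min lexx.
  by lra.
by move/(sup_upper_bound A_sup); rewrite -/c; lra.
Qed.

Lemma diff_nonneg0_le : `|f t - f 0| <= e * t.
Proof. by rewrite -c_eq_t; apply: P_c. Qed.

End ZeroDerivative.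

Lemma diff_nonneg0_const f t : 0 <= t ->
  (forall u, 0 <= u <= t -> diff_nonneg f u 0) -> f t = f 0.
Proof.
move=> t0 f0; apply/eqP; rewrite -subr_eq0 -normr_le0 leNgt; apply/negP => Dp.
have e0 : 0 < `|f t - f 0| / (2 * (t + 1)) by rewrite divr_gt0 // mulr_gt0 // ltr_wpDl.
have := diff_nonneg0_le t0 e0 f0; rewrite mulrAC ler_pdivlMr ?mulr_gt0 ?ltr_wpDl //.
by nra.
Qed.

End DerivNonneg.

Section Balance.
Variables (R : realType) (xs : seq R) (s eps : R).
Hypotheses (s0 : 0 < s) (xs_gt0 : forall x, x \in xs -> 0 < x).
Hypothesis xs_close : forall x y, x \in xs -> y \in xs -> `|x - y| <= eps.
Hypotheses (prod_xs : \prod_(x <- xs) x = s ^+ 2) (xs_neq0 : xs != [::]).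

Let L := size xs.
Let q := powR s (2 / L%:R) + eps.

Let has_xs : has predT xs. Proof. by rewrite has_predT lt0n size_eq0. Qed.

Lemma le_geomean_add x : x \in xs -> x <= q.
Proof.
have L0 : (0 < L)%N by rewrite -has_predT.
pose p := powR s (2 / L%:R).
have p0 : 0 <= p by apply: powR_ge0.
have pL : p ^+ L = s ^+ 2.
  rewrite -powR_mulrn // -powRrM mulfVK ?pnatr_eq0 -?lt0n //.
  by rewrite -[2 in LHS]/(2%:R) powR_mulrn // ltW.
(* some factor is at most the geometric mean [p] of the [xs] *)
have [/hasP[m mxs /= mp] | /hasPn gtp] := boolP (has (<= p) xs); last first.
  suff : \prod_(y <- xs | y \in xs) p < \prod_(y <- xs | y \in xs) y.
    by rewrite -!big_seq prod_xs big_const_seq count_predT iter_mulr_1 -/L pL ltxx.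
  apply: ltr_prod => [|y yxs]; first by case/hasP: has_xs => y yxs _; apply/hasP; exists y.
  by rewrite p0 /= ltNge; apply: gtp.
move=> xxs; have := xs_close xxs mxs; rewrite ler_norml => /andP[_].
by rewrite /q -/p; lra.
Qed.

Let q_gt0 : 0 < q.
Proof.
by case/hasP: has_xs => x xxs _; apply: lt_le_trans (xs_gt0 xxs) (le_geomean_add xxs).
Qed.

Lemma size_div_le_sum_inv : L%:R / q <= \sum_(x <- xs) x^-1.
Proof.
rewrite mulr_natl /L -count_predT -iter_addr_0 -big_const_seq /= !big_seq.
by apply: ler_sum => x xxs; rewrite lef_pV2 ?posrE ?q_gt0 ?xs_gt0 ?le_geomean_add.
Qed.

Lemma sqr_mul_sum_inv_le : s ^+ 2 * \sum_(x <- xs) x^-1 <= L%:R * q ^+ (L - 1).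
Proof.
rewrite mulr_sumr mulr_natl /L -count_predT -iter_addr_0 -big_const_seq /= !big_seq.
apply: ler_sum => x xxs.
rewrite -prod_xs (perm_big _ (perm_to_rem xxs)) big_cons mulrAC mulfV ?gt_eqF ?xs_gt0 //.
rewrite mul1r subn1 -(size_rem xxs) -count_predT -iter_mulr_1 -big_const_seq /= !big_seq.
apply: ler_prod => y yrem; have yxs := mem_rem yrem.
by rewrite ltW ?xs_gt0 ?le_geomean_add.
Qed.

End Balance.

Lemma has_deriv_unique (R : realType) (f : R -> R) t d1 d2 :
  has_deriv f t d1 -> has_deriv f t d2 -> d1 = d2.
Proof.
move=> fd1 fd2; apply/eqP; rewrite -subr_eq0 -normr_le0 leNgt; apply/negP => dp.
have e0 : 0 < `|d1 - d2| / 4 by rewrite divr_gt0.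
have [a a0 fa] := fd1 _ e0; have [b b0 fb] := fd2 _ e0.
pose h := Num.min a b / 2.
have h0 : 0 < h by rewrite divr_gt0 // lt_min a0 b0.
have hab : h < Num.min a b by rewrite ltr_pdivrMr // ltr_pMr ?ltr1n // lt_min a0 b0.
move: hab; rewrite lt_min -(gtr0_norm h0) => /andP[ha hb].
have hn0 : h != 0 by rewrite gt_eqF.
have := fa h hn0 ha; have := fb h hn0 hb.
set Q := (f (t + h) - f t) / h => Q2 Q1.
have : `|d1 - d2| <= `|Q - d2| + `|Q - d1|.
  by rewrite (_ : d1 - d2 = (Q - d2) - (Q - d1)) ?ler_normB //; ring.
lra.
Qed.

Section Gradient.
Variables (R : realType) (N : nat) (D : 'I_N -> nat).
Implicit Types (X P : tensor R D).

Lemma tnormZ (u : R) P : tnorm (fun i => u * P i) = `|u| * tnorm P.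
Proof.
rewrite /tnorm /tdot -sqrtr_sqr -sqrtrM ?sqr_ge0 // mulr_sumr.
by congr Num.sqrt; apply: eq_bigr => i _; ring.
Qed.

Lemma tdotZr G (u : R) P : tdot G (fun i => u * P i) = u * tdot G P.
Proof. by rewrite /tdot mulr_sumr; apply: eq_bigr => i _; ring. Qed.

Lemma tdot_sumr n (w : 'I_n -> R) (P : 'I_n -> tensor R D) G :
  tdot G (fun i => \sum_(b < n) w b * P b i) = \sum_(b < n) w b * tdot G (P b).
Proof.
rewrite /tdot; under eq_bigr do rewrite mulr_sumr.
by rewrite exchange_big; apply: eq_bigr => b _; rewrite mulr_sumr; apply: eq_bigr => i _; ring.
Qed.

Lemma diff_nonneg_sqnorm n (x : 'I_n -> R -> R) (P : 'I_n -> tensor R D) K G s :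
  (forall b, diff_nonneg (x b) s (- tdot G (P b))) ->
  (forall i, K i = \sum_(b < n) x b s * P b i) ->
  diff_nonneg (fun u => \sum_(b < n) x b u ^+ 2) s (2 * - tdot G K).
Proof.
move=> xP KP; have := diff_nonneg_sum (index_enum _) (fun b => diff_nonneg_sqr (xP b)).
apply: diff_nonneg_eq => //.
have -> : K = (fun i => \sum_(b < n) x b s * P b i) by apply: boolp.funext.
by rewrite tdot_sumr -sumrN mulr_sumr; apply: eq_bigr => b _; ring.
Qed.

Lemma gradient_dir_deriv (L : tensor R D -> R) G X P : is_gradient L G ->
  has_deriv (fun u => L (tadd X (fun i => u * P i))) 0 (tdot (G X) P).
Proof.
move=> LG e e0.
pose M := tnorm P + 1.
have M0 : 0 < M by rewrite ltr_wpDl // sqrtr_ge0.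
have [d d0 Ld] := LG X (e / M) (divr_gt0 e0 M0).
exists (d / M); first by rewrite divr_gt0.
move=> h h0 hd.
have X0 : tadd X (fun i => 0 * P i) = X.
  by apply: boolp.funext => i; rewrite /tadd mul0r addr0.
rewrite add0r X0.
have hP : tnorm (fun i => h * P i) < d.
  rewrite tnormZ; move: hd; rewrite ltr_pdivlMr // => hd.
  by apply: le_lt_trans hd; rewrite ler_wpM2l // lerDl.
have := Ld _ hP; rewrite tnormZ tdotZr.
set Q := L _ - L X => Lh.
have -> : Q / h - tdot (G X) P = (Q - h * tdot (G X) P) / h by field.
rewrite normrM normfV ler_pdivrMr ?normr_gt0 //; apply: le_trans Lh _.
have PM : tnorm P <= M by rewrite lerDl.
by rewrite -mulrA ler_wpM2l ?(ltW e0) // mulrC ler_pdivrMr // ler_wpM2l.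
Qed.

End Gradient.

Lemma bounds_by_sign (R : realType) (s2 S a b g : R) : 0 < s2 ->
  a <= S -> s2 * S <= b ->
  if 0 <= g then s2 * a * g <= s2 * g * S <= b * g
  else b * g <= s2 * g * S <= s2 * a * g.
Proof.
move=> s20 aS Sb; case: ifP => g0; apply/andP.
  have := mulr_ge0 (ltW s20) g0.
  by split; nra.
have gn : g < 0 by rewrite ltNge g0.
have : s2 * g < 0 by rewrite pmulr_rlt0.
by split; nra.
Qed.

Section ModeTree.
Variables (N : nat) (T : {set {set 'I_N}}).
Hypothesis HT : is_mode_tree T.
Implicit Types (A B C nu mu c : {set 'I_N}).

Lemma mode_tree_neq0 A : A \in T -> A != set0.
Proof. by case: HT => _ _ T0 _ AT; apply: contraNneq T0 => <-. Qed.

Lemma children_node nu c : c \in children T nu -> c \in T.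
Proof. by rewrite inE => /andP[]. Qed.

Lemma children_proper nu c : c \in children T nu -> c \proper nu.
Proof. by rewrite inE => /and3P[]. Qed.

Lemma children_disjoint nu c c' : c \in children T nu -> c' \in children T nu ->
  c != c' -> [disjoint c & c'].
Proof.
have maxc c1 c2 : c1 \in children T nu -> c2 \in children T nu -> c1 != c2 ->
    ~~ (c1 \subset c2).
  rewrite !inE => /and3P[_ _ /forallP max1] /and3P[c2T c2nu _] c12.
  apply/negP => c12s; have : c1 \proper c2 by rewrite properEneq c12 c12s.
  by move/(implyP (implyP (max1 c2) c2T)); rewrite c2nu.
move=> cn c'n cc'; case: HT => _ _ _ /(_ c c' (children_node cn) (children_node c'n)).
by rewrite (negbTE (maxc _ _ cn c'n cc')) (negbTE (maxc _ _ c'n cn _)) // eq_sym.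
Qed.

Lemma child_containing A mu : A \in T -> mu \in T -> A \proper mu ->
  exists2 c, c \in children T mu & A \subset c.
Proof.
move=> AT muT Amu.
pose S := [set X in T | (A \subset X) && (X \proper mu)].
have AS : A \in S by rewrite inE AT subxx Amu.
(* a largest node between [A] and [mu] is a child of [mu] *)
case: (arg_maxnP (fun X : {set 'I_N} => #|X|) AS) => c cS cmax.
have : c \in S := cS; rewrite inE => /and3P[cT Ac cmu]; exists c => //.
rewrite inE cT cmu; apply/forallP => c'; apply/implyP => c'T.
apply/implyP => cc'; apply/negP => c'mu.
have : c' \in S by rewrite inE c'T c'mu (subset_trans Ac (proper_sub cc')).
move/cmax => le_c'c; have : (#|c'| <= #|c|)%N := le_c'c.
by rewrite leqNgt proper_card.
Qed.

Lemma leaf_of_card nu : (1 < #|nu|)%N -> leaf_of nu = None.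
Proof.
by rewrite /leaf_of; case: pickP => // n /eqP ->; rewrite cards1.
Qed.

Lemma leaf_of_proper A B : A \in T -> A \proper B -> leaf_of B = None.
Proof.
move=> AT AB; apply/leaf_of_card/leq_trans/proper_card/AB.
by rewrite ltnS card_gt0 mode_tree_neq0.
Qed.

Lemma disjoint_not_subset A B C : A \in T -> A \subset B -> [disjoint B & C] ->
  ~~ (A \subset C).
Proof.
move=> AT AB BC; apply/negP => AC.
case/set0Pn: (mode_tree_neq0 AT) => x xA.
by move/pred0P: BC => /(_ x); rewrite /= (subsetP AB x xA) (subsetP AC x xA).
Qed.

End ModeTree.

Section Evaluation.
Variables (R : realType) (N : nat) (D : 'I_N -> nat).
Variables (T : {set {set 'I_N}}) (Rk : {set 'I_N} -> nat).
Hypothesis HT : is_mode_tree T.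

Local Notation Wts := (Weights R D T Rk).
(* node outputs indexed by fuel, node, column and multi-index *)
Local Notation fam := (nat -> {set 'I_N} -> nat -> Idx D -> R).
Implicit Types (W : Wts) (F : fam) (m mu nu : {set 'I_N}).

Lemma mx_atE p q (A : 'M[R]_(p, q)) (i : 'I_p) (j : 'I_q) : mx_at A i j = A i j.
Proof. by rewrite /mx_at !valK. Qed.

Lemma mx_at_out p q (A : 'M[R]_(p, q)) i j : ((p <= i) || (q <= j))%N -> mx_at A i j = 0.
Proof.
rewrite /mx_at; case: insubP => [i' /= ip _|//]; case: insubP => [j' /= jq _|//].
by rewrite leqNgt ip leqNgt jq.
Qed.

Lemma sum_ord_delta n j (g : nat -> R) :
  \sum_(b < n) ((b : nat) == j)%:R * g b = (j < n)%:R * g j.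
Proof.
case: (ltnP j n) => [jn|nj].
  rewrite (bigD1 (Ordinal jn)) //= eqxx mul1r big1 ?addr0 ?mul1r // => b.
  by rewrite -val_eqE /= => /negbTE ->; rewrite mul0r.
by rewrite mul0r big1 // => b _; rewrite ltn_eqF ?mul0r // (leq_trans (ltn_ord b) nj).
Qed.

Definition node_tens W : fam := tens W None.

Fixpoint tens_repl W m (Phi : nat -> nat -> Idx D -> R) k mu j i : R :=
  match k with
  | 0 => 0
  | k'.+1 =>
    if mu == m then Phi k' j i else
    if leaf_of mu is Some n then mx_at (W mu) (i n) j else
    \sum_(r' < rk D Rk mu)
       mx_at (W mu) r' j * \prod_(c in children T mu) tens_repl W m Phi k' c r' i
  end.

(* [F] obeys the tree recursion of [W] strictly above [nu1] and is the plain evaluation on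
   nodes disjoint from [nu1]: it is then determined above [nu1] by its values at [nu1]. *)
Definition tree_rec W nu1 F :=
  [/\ forall mu j i, F 0%N mu j i = 0,
      forall k mu j i, mu \in T -> nu1 \proper mu ->
        F k.+1 mu j i = \sum_(r' < rk D Rk mu)
          mx_at (W mu) r' j * \prod_(c in children T mu) F k c r' i &
      forall k c j i, c \in T -> [disjoint nu1 & c] -> F k c j i = node_tens W k c j i].

Lemma node_tensS W k mu j i : leaf_of mu = None ->
  node_tens W k.+1 mu j i = \sum_(r' < rk D Rk mu)
     mx_at (W mu) r' j * \prod_(c in children T mu) node_tens W k c r' i.
Proof. by rewrite /node_tens /= => ->. Qed.

Lemma prod_children_split W nu1 F mu c0 k r' i : tree_rec W nu1 F ->
  nu1 \in T -> c0 \in children T mu -> nu1 \subset c0 ->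
  \prod_(c in children T mu) F k c r' i =
  F k c0 r' i * \prod_(c in children T mu | c != c0) node_tens W k c r' i.
Proof.
move=> [_ _ Fout] n1T c0mu n1c0; rewrite (bigD1 c0) //=; congr (_ * _).
apply: eq_bigr => c /andP[cmu cc0]; apply: Fout; first exact: children_node cmu.
by apply: disjointWl n1c0 _; rewrite (children_disjoint HT c0mu cmu) // eq_sym.
Qed.

Lemma tree_rec_lincomb W nu1 (F1 F0 : fam) n (Fb : 'I_n -> fam) (a0 : R) (a : 'I_n -> R) :
  nu1 \in T -> tree_rec W nu1 F1 -> tree_rec W nu1 F0 -> (forall b, tree_rec W nu1 (Fb b)) ->
  (forall k j i, F1 k nu1 j i = a0 * F0 k nu1 j i + \sum_(b < n) a b * Fb b k nu1 j i) ->
  forall k mu j i, mu \in T -> nu1 \subset mu ->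
    F1 k mu j i = a0 * F0 k mu j i + \sum_(b < n) a b * Fb b k mu j i.
Proof.
move=> n1T F1rec F0rec Fbrec at_nu1 k; elim: k => [|k IH] mu j i muT n1mu.
  case: F1rec => -> _ _; case: F0rec => -> _ _; rewrite mulr0 add0r.
  by rewrite big1 // => b _; case: (Fbrec b) => -> _ _; rewrite mulr0.
have [<-|n1neq] := eqVneq nu1 mu; first exact: at_nu1.
have n1mu' : nu1 \proper mu by rewrite properEneq n1neq.
have [c0 c0mu n1c0] := child_containing n1T muT n1mu'.
pose Q r' := \prod_(c in children T mu | c != c0) node_tens W k c r' i.
pose w (r' : 'I_(rk D Rk mu)) := mx_at (W mu) r' j.
have split_rec G : tree_rec W nu1 G ->
    G k.+1 mu j i = \sum_(r' < rk D Rk mu) w r' * (G k c0 r' i * Q r').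
  move=> Grec; case: (Grec) => _ -> // _; apply: eq_bigr => r' _.
  by rewrite (prod_children_split _ _ _ Grec n1T c0mu n1c0).
rewrite !split_rec //.
under eq_bigr do rewrite IH ?(children_node c0mu) //.
under [\sum_(b < n) _]eq_bigr do rewrite split_rec // mulr_sumr.
rewrite exchange_big /= mulr_sumr -big_split /=; apply: eq_bigr => r' _.
rewrite mulrDl mulrDr mulr_suml mulr_sumr; congr (_ + _); first by ring.
by apply: eq_bigr => b _; ring.
Qed.

Lemma node_tens_local W W' k mu j i : mu \in T ->
  (forall m, m \in T -> m \subset mu -> W' m = W m) ->
  node_tens W' k mu j i = node_tens W k mu j i.
Proof.
elim: k mu j i => [//|k IH] mu j i muT WW'.
rewrite /node_tens /= (WW' mu muT (subxx _)); case: (leaf_of mu) => [n|] //.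
apply: eq_bigr => r' _; congr (_ * _); apply: eq_bigr => c cmu.
have cmu' := proper_sub (children_proper cmu).
by apply: IH (children_node cmu) _ => m mT mc; apply: WW' (subset_trans mc cmu').
Qed.

Lemma tens_repl_out W m Phi k mu j i : ~~ (m \subset mu) ->
  tens_repl W m Phi k mu j i = node_tens W k mu j i.
Proof.
elim: k mu j i => [//|k IH] mu j i mmu.
rewrite /node_tens /= (_ : (mu == m) = false); last by apply: contraNF mmu => /eqP ->.
case: (leaf_of mu) => [n|] //; apply: eq_bigr => r' _; congr (_ * _).
apply: eq_bigr => c cmu; apply: IH; apply: contra mmu => mc.
exact: subset_trans mc (proper_sub (children_proper cmu)).
Qed.

Lemma Etens_out W nu r k mu j i : ~~ (nu \subset mu) ->
  tens W (Some (nu, r)) k mu j i = node_tens W k mu j i.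
Proof.
elim: k mu j i => [//|k IH] mu j i nmu.
rewrite /node_tens /=; case: (leaf_of mu) => [n|] //.
rewrite (_ : (mu == nu) = false); last by apply: contraNF nmu => /eqP ->.
apply: eq_bigr => r' _; congr (_ * _); apply: eq_bigr => c cmu; apply: IH.
by apply: contra nmu => nc; apply: subset_trans nc (proper_sub (children_proper cmu)).
Qed.

Lemma tree_rec_node_tens W W' nu1 m : m \in T -> m \subset nu1 ->
  (forall m', m' != m -> W' m' = W m') -> tree_rec W nu1 (node_tens W').
Proof.
move=> mT mn1 WW'; split => // [k mu j i muT n1mu | k c j i cT n1c].
  have mmu : m \proper mu := sub_proper_trans mn1 n1mu.
  rewrite node_tensS ?(leaf_of_proper HT mT mmu) // WW' //.
  by apply: contraTneq mmu => ->; rewrite properxx.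
apply: node_tens_local => // m' _ m'c; apply: WW'.
by apply: contraNneq (disjoint_not_subset HT mT mn1 n1c) => <-.
Qed.

Lemma tree_rec_tens_repl W m nu1 Phi : m \in T -> m \subset nu1 ->
  tree_rec W nu1 (tens_repl W m Phi).
Proof.
move=> mT mn1; split => // [k mu j i muT n1mu | k c j i cT n1c].
  have mmu : m \proper mu := sub_proper_trans mn1 n1mu.
  rewrite /= (leaf_of_proper HT mT mmu) (_ : (mu == m) = false) //.
  by apply: contraTF mmu => /eqP ->; rewrite properxx.
exact/tens_repl_out/(disjoint_not_subset HT mT mn1 n1c).
Qed.

Lemma tree_rec_Etens W nu r : nu \in T -> tree_rec W nu (tens W (Some (nu, r))).
Proof.
move=> nuT; split => // [k mu j i muT numu | k c j i cT nuc].
  rewrite /= (leaf_of_proper HT nuT numu) (_ : (mu == nu) = false) //.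
  by apply: contraTF numu => /eqP ->; rewrite properxx.
exact/Etens_out/(disjoint_not_subset HT nuT (subxx nu) nuc).
Qed.

Definition node_in W m a k (i : Idx D) : R :=
  if leaf_of m is Some n then ((i n : nat) == a)%:R
  else \prod_(c in children T m) node_tens W k c a i.

Lemma node_tens_in W m k j i :
  node_tens W k.+1 m j i = \sum_(a < rk D Rk m) mx_at (W m) a j * node_in W m a k i.
Proof.
rewrite /node_in; case E: (leaf_of m) => [n|]; last by rewrite node_tensS.
under eq_bigr do rewrite mulrC eq_sym.
have inm : (i n < rk D Rk m)%N by rewrite /rk E ltn_ord.
by rewrite (sum_ord_delta _ _ (fun a => mx_at (W m) a j)) inm mul1r /node_tens /= E.
Qed.

Lemma node_in_local W W' m a k i : m \in T -> (forall m', m' != m -> W' m' = W m') ->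
  node_in W' m a k i = node_in W m a k i.
Proof.
move=> mT WW'; rewrite /node_in; case: (leaf_of m) => //.
apply: eq_bigr => c cm; apply: node_tens_local (children_node cm) _ => m' _ m'c.
apply: WW'; apply: contraTneq (sub_proper_trans m'c (children_proper cm)) => ->.
by rewrite properxx.
Qed.

Lemma bump_neq W m a b s m' : m' != m -> Defs.bump W m a b s m' = W m'.
Proof. by move=> m'm; apply/matrixP => x y; rewrite !mxE (negbTE m'm) mulr0 addr0. Qed.

Lemma mx_at_bump W m a b s x y : (a < rk D Rk m)%N -> (b < rkP D T Rk m)%N ->
  mx_at (Defs.bump W m a b s m) x y = mx_at (W m) x y + s * ((x == a) && (y == b))%:R.
Proof.
move=> am bm.
have [xm|mx] := ltnP x (rk D Rk m); last first.
  rewrite !mx_at_out ?mx // add0r (_ : x == a = false) ?mulr0 //.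
  by apply: contraTF am => /eqP <-; rewrite -leqNgt.
have [ym|my] := ltnP y (rkP D T Rk m); last first.
  rewrite !mx_at_out ?my ?orbT // add0r (_ : y == b = false) ?andbF ?mulr0 //.
  by apply: contraTF bm => /eqP <-; rewrite -leqNgt.
by rewrite -[x]/(nat_of_ord (Ordinal xm)) -[y]/(nat_of_ord (Ordinal ym)) !mx_atE !mxE eqxx.
Qed.

Definition partial W m a b : fam :=
  tens_repl W m (fun k j i => (j == b)%:R * node_in W m a k i).

(* [local W nu r] at the root is sigma_{nu,r} E_{nu,r}: node [nu] outputs its [r]-th
   local component. *)
Definition local W nu r : fam :=
  tens_repl W nu (fun k j i => mx_at (W nu) r j * node_in W nu r k i).

Section AtNode.
Variables (W : Wts) (m : {set 'I_N}).
Hypothesis mT : m \in T.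

Lemma node_tens_bump a b s : (a < rk D Rk m)%N -> (b < rkP D T Rk m)%N ->
  forall k mu j i, mu \in T -> m \subset mu ->
  node_tens (Defs.bump W m a b s) k mu j i = node_tens W k mu j i + s * partial W m a b k mu j i.
Proof.
move=> am bm k mu j i muT mmu.
have WW' m' : m' != m -> Defs.bump W m a b s m' = W m' by apply: bump_neq.
have lin := tree_rec_lincomb (a0 := 1) (a := fun _ : 'I_1 => s) (Fb := fun=> partial W m a b)
  mT (tree_rec_node_tens mT (subxx m) WW') (tree_rec_node_tens mT (subxx m) (fun _ _ => erefl))
  (fun=> tree_rec_tens_repl W _ mT (subxx m)).
rewrite (lin _ k mu j i muT mmu) ?big_ord1 ?mul1r //.
case=> [|k'] j' i'; first by rewrite big_ord1 /node_tens /partial /= !mulr0 addr0.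
rewrite big_ord1 mul1r !node_tens_in /=.
under eq_bigr do rewrite mx_at_bump // (node_in_local _ _ _ mT WW') mulrDl.
rewrite /partial /= eqxx big_split /=; congr (_ + _).
pose g x := s * ((j' == b)%:R * node_in W m x k' i').
rewrite (eq_bigr (fun x : 'I_(rk D Rk m) => ((x : nat) == a)%:R * g x)); last first.
  by move=> x _; rewrite -mulnb natrM /g; ring.
by rewrite sum_ord_delta am mul1r.
Qed.

Lemma partial_col_sum b k mu j i : mu \in T -> m \subset mu ->
  tens_repl W m (fun k j i => (j == b)%:R * node_tens W k.+1 m b i) k mu j i =
  \sum_(a < rk D Rk m) mx_at (W m) a b * partial W m a b k mu j i.
Proof.
move=> muT mmu.
pose Phi k j i := (j == b)%:R * node_tens W k.+1 m b i.
have lin := tree_rec_lincomb (a0 := 0) (a := fun a : 'I_(rk D Rk m) => mx_at (W m) a b)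
  (F1 := tens_repl W m Phi) (F0 := tens_repl W m Phi) (Fb := fun a => partial W m a b) mT
  (tree_rec_tens_repl W _ mT (subxx m)) (tree_rec_tens_repl W _ mT (subxx m))
  (fun=> tree_rec_tens_repl W _ mT (subxx m)).
rewrite (lin _ k mu j i muT mmu) ?mul0r ?add0r //.
case=> [|k'] j' i'; first by rewrite mul0r add0r big1 // => a _; rewrite mulr0.
rewrite mul0r add0r /partial /= eqxx /Phi node_tens_in mulr_sumr.
by apply: eq_bigr => a _; ring.
Qed.

End AtNode.

Section AtInterior.
Variables (W : Wts) (nu : {set 'I_N}) (r : nat).
Hypotheses (nuT : nu \in T) (nu_int : leaf_of nu = None).

Lemma local_row_sum k mu j i : mu \in T -> nu \subset mu ->
  local W nu r k mu j i = \sum_(b < rkP D T Rk nu) mx_at (W nu) r b * partial W nu r b k mu j i.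
Proof.
move=> muT numu.
have lin := tree_rec_lincomb (a0 := 0) (a := fun b : 'I_(rkP D T Rk nu) => mx_at (W nu) r b)
  (F1 := local W nu r) (F0 := local W nu r) (Fb := fun b => partial W nu r b) nuT
  (tree_rec_tens_repl W _ nuT (subxx nu)) (tree_rec_tens_repl W _ nuT (subxx nu))
  (fun=> tree_rec_tens_repl W _ nuT (subxx nu)).
rewrite (lin _ k mu j i muT numu) ?mul0r ?add0r //.
case=> [|k'] j' i'; first by rewrite mul0r add0r big1 // => a _; rewrite mulr0.
rewrite mul0r add0r /local /partial /= eqxx.
pose g x := mx_at (W nu) r x * node_in W nu r k' i'.
rewrite (eq_bigr (fun x : 'I_(rkP D T Rk nu) => ((x : nat) == j')%:R * g x)); last first.
  by move=> x _; rewrite /g eq_sym; ring.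
rewrite sum_ord_delta /g; case: ltnP => j'nu; first by rewrite mul1r.
by rewrite mx_at_out ?j'nu ?orbT // !mul0r.
Qed.

Lemma Etens_local : sigma W nu r != 0 -> forall k mu j i, mu \in T -> nu \subset mu ->
  tens W (Some (nu, r)) k mu j i = (sigma W nu r)^-1 * local W nu r k mu j i.
Proof.
move=> s0 k mu j i muT numu.
have lin := tree_rec_lincomb (a0 := (sigma W nu r)^-1) (a := fun _ : 'I_0 => 0)
  (F0 := local W nu r) (Fb := fun=> local W nu r) nuT (tree_rec_Etens W r nuT)
  (tree_rec_tens_repl W _ nuT (subxx nu)) (fun _ : 'I_0 => tree_rec_tens_repl W _ nuT (subxx nu)).
rewrite (lin _ k mu j i muT numu) ?big_ord0 ?addr0 //.
case=> [|k'] j' i'; first by rewrite big_ord0 addr0 /= mulr0.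
rewrite big_ord0 addr0 /local /= nu_int eqxx (negbTE s0) /node_in nu_int -!mulrA.
congr (_ * (_ * _)); apply: eq_bigr => c cnu; apply: Etens_out.
by apply/negP => nuc; move: (sub_proper_trans nuc (children_proper cnu)); rewrite properxx.
Qed.

Lemma col_repl_local c : (r < rk D Rk nu)%N -> c \in children T nu ->
  forall k mu j i, mu \in T -> nu \subset mu ->
  tens_repl W c (fun k j i => (j == r)%:R * node_tens W k.+1 c r i) k mu j i =
  local W nu r k mu j i.
Proof.
move=> rnu cnu k mu j i muT numu.
have cT := children_node cnu; have cnu' := children_proper cnu.
pose Phi k j i := (j == r)%:R * node_tens W k.+1 c r i.
have lin := tree_rec_lincomb (a0 := 1) (a := fun _ : 'I_0 => 0)
  (F1 := tens_repl W c Phi) (F0 := local W nu r) (Fb := fun=> local W nu r) nuT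
  (tree_rec_tens_repl W _ cT (proper_sub cnu')) (tree_rec_tens_repl W _ nuT (subxx nu))
  (fun _ : 'I_0 => tree_rec_tens_repl W _ nuT (subxx nu)).
rewrite (lin _ k mu j i muT numu) ?big_ord0 ?addr0 ?mul1r //.
case=> [|k'] j' i'; first by rewrite big_ord0 addr0 mul1r.
rewrite big_ord0 addr0 mul1r /local /= nu_int eqxx (_ : (nu == c) = false); last first.
  by apply: contraTF cnu' => /eqP <-; rewrite properxx.
(* only the child [c] sees the replacement, and it selects the column [r] *)
have at_c r' : tens_repl W c Phi k' c r' i' =
    (r' == r)%:R * node_tens W k' c r i'.
  by case: k' => [|k'] /=; rewrite ?mulr0 // eqxx.
pose Q r' := \prod_(c' in children T nu | c' != c) node_tens W k' c' r' i'.
have prod_split r' : \prod_(c' in children T nu) tens_repl W c Phi k' c' r' i' =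
    (r' == r)%:R * (node_tens W k' c r i' * Q r').
  rewrite (bigD1 c) //= at_c -mulrA; congr (_ * (_ * _)).
  apply: eq_bigr => c' /andP[c'nu c'c]; apply: tens_repl_out.
  apply: (disjoint_not_subset HT cT (subxx c)).
  by rewrite (children_disjoint HT cnu c'nu) // eq_sym.
under eq_bigr do rewrite prod_split mulrCA.
rewrite (sum_ord_delta _ _ (fun x => mx_at (W nu) x j' * (node_tens W k' c r i' * Q x))).
by rewrite rnu mul1r /node_in nu_int (bigD1 c).
Qed.

End AtInterior.

End Evaluation.

Lemma le_unbalancedness (R : realType) N (D : 'I_N -> nat) T Rk (V : Weights R D T Rk)
    nu r x y : interior T nu -> (r < rk D Rk nu)%N ->
  x \in lc_sqnorms V nu r -> y \in lc_sqnorms V nu r -> `|x - y| <= unbalancedness V.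
Proof.
move=> nuI rnu xV yV; rewrite /unbalancedness.
apply: le_trans _ (le_bigmax_cond _ _ nuI); apply: le_trans _ (le_bigmax _ _ (Ordinal rnu)).
apply: le_trans _ (le_bigmax_seq _ _ _ _ xV isT); exact: le_bigmax_seq _ _ _ _ yV isT.
Qed.

Lemma prod_lc_sqnorms (R : realType) N (D : 'I_N -> nat) T Rk (V : Weights R D T Rk) nu r :
  \prod_(x <- lc_sqnorms V nu r) x = sigma V nu r ^+ 2.
Proof. by rewrite /lc_sqnorms big_cons big_map prodrXl -exprMn /sigma big_enum. Qed.

Lemma size_lc_sqnorms (R : realType) N (D : 'I_N -> nat) T Rk (V : Weights R D T Rk) nu r :
  size (lc_sqnorms V nu r) = (#|children T nu| + 1)%N.
Proof. by rewrite /= size_map -cardE addn1. Qed.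

Section GradientFlow.
Variables (R : realType) (N : nat) (D : 'I_N -> nat).
Variables (T : {set {set 'I_N}}) (Rk : {set 'I_N} -> nat).
Variables (L : tensor R D -> R) (gradL : tensor R D -> tensor R D).
Variable W : R -> Weights R D T Rk.
Hypotheses (HT : is_mode_tree T) (HG : is_gradient L gradL) (GF : gradient_flow L W).

Let G s := gradL (endT (W s)).
Let at_root (F : nat -> {set 'I_N} -> nat -> Idx D -> R) : tensor R D :=
  fun i => F N.+1 setT 0%N i.
Let setT_node : setT \in T. Proof. by case: HT. Qed.

Lemma entry_deriv m (a : 'I_(rk D Rk m)) (b : 'I_(rkP D T Rk m)) s : 0 <= s -> m \in T ->
  diff_nonneg (fun u => W u m a b) s (- tdot (G s) (at_root (partial (W s) m a b))).
Proof.
move=> s0 mT; have [d [phid Wd]] := GF s0 mT a b.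
suff <- : d = tdot (G s) (at_root (partial (W s) m a b)) by apply/diff_nonnegP.
apply: has_deriv_unique phid _.
have -> : (fun u => phiH L (Defs.bump (W s) m a b u)) =
    (fun u => L (tadd (endT (W s)) (fun i => u * at_root (partial (W s) m a b) i))).
  apply: boolp.funext => u; congr L; apply: boolp.funext => i.
  exact: (node_tens_bump HT (W s) mT u (ltn_ord a) (ltn_ord b) N.+1 0 i setT_node (subsetT m)).
exact: gradient_dir_deriv.
Qed.

Definition row_sqnorm (V : Weights R D T Rk) nu r :=
  \sum_(j < rkP D T Rk nu) mx_at (V nu) r j ^+ 2.
Definition col_sqnorm (V : Weights R D T Rk) c r :=
  \sum_(a < rk D Rk c) mx_at (V c) a r ^+ 2.

Section LocalComponent.
Variables (nu : {set 'I_N}) (r : nat).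
Hypotheses (nuT : nu \in T) (nu_int : leaf_of nu = None) (rnu : (r < rk D Rk nu)%N).

Let K s := at_root (local (W s) nu r).

Lemma row_sqnorm_deriv s : 0 <= s ->
  diff_nonneg (fun u => row_sqnorm (W u) nu r) s (2 * - tdot (G s) (K s)).
Proof.
move=> s0; apply: (diff_nonneg_sqnorm (P := fun b => at_root (partial (W s) nu r b))).
  move=> b; apply: diff_nonneg_eq (entry_deriv (Ordinal rnu) b s0 nuT) => // u.
  by rewrite -[r]/(nat_of_ord (Ordinal rnu)) mx_atE.
by move=> i; apply: local_row_sum => //; apply: subsetT.
Qed.

Lemma col_sqnorm_deriv c s : c \in children T nu -> (r < rkP D T Rk c)%N -> 0 <= s ->
  diff_nonneg (fun u => col_sqnorm (W u) c r) s (2 * - tdot (G s) (K s)).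
Proof.
move=> cnu rc s0; have cT := children_node cnu.
apply: (diff_nonneg_sqnorm (P := fun a => at_root (partial (W s) c a r))).
  move=> a; apply: diff_nonneg_eq (entry_deriv a (Ordinal rc) s0 cT) => // u.
  by rewrite -[r]/(nat_of_ord (Ordinal rc)) mx_atE.
move=> i; rewrite /K /at_root -(col_repl_local HT _ nuT nu_int rnu cnu) ?subsetT //.
by rewrite partial_col_sum ?subsetT.
Qed.

Implicit Type V : Weights R D T Rk.

Definition lc_index := None :: [seq Some c | c <- enum (children T nu)].
Definition lc_sqnorm V (o : option {set 'I_N}) :=
  if o is Some c then col_sqnorm V c r else row_sqnorm V nu r.

Lemma sigma_prod_sqrt V : sigma V nu r = \prod_(o <- lc_index) Num.sqrt (lc_sqnorm V o).
Proof. by rewrite /sigma big_cons big_map big_enum. Qed.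

Lemma lc_sqnormsE V : lc_sqnorms V nu r = [seq lc_sqnorm V o | o <- lc_index].
Proof.
have sqnorm_ge0 (I : finType) (F : I -> R) : 0 <= \sum_i F i ^+ 2.
  by apply: sumr_ge0 => i _; apply: sqr_ge0.
rewrite /lc_sqnorms /lc_index /= /row_norm sqr_sqrtr //; congr (_ :: _).
by rewrite -map_comp; apply: eq_map => c; rewrite /= /col_norm sqr_sqrtr.
Qed.

Lemma sigma_neq0_lc V o : sigma V nu r != 0 -> o \in lc_index -> 0 < lc_sqnorm V o.
Proof.
by rewrite sigma_prod_sqrt prodf_seq_neq0 => /allP s0 /s0 /=; rewrite sqrtr_eq0 -ltNge.
Qed.

Lemma sigma_neq0_col V c : sigma V nu r != 0 -> c \in children T nu ->
  (r < rkP D T Rk c)%N.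
Proof.
move=> s0 cnu; rewrite ltnNge; apply/negP => rc.
have : Some c \in lc_index by rewrite inE map_f ?mem_enum.
move/(sigma_neq0_lc s0); rewrite /= /col_sqnorm big1 ?ltxx // => a _.
by rewrite mx_at_out ?rc ?orbT // expr0n.
Qed.

Lemma lc_sqnorm_deriv o s :
  (forall c, c \in children T nu -> (r < rkP D T Rk c)%N) -> o \in lc_index -> 0 <= s ->
  diff_nonneg (fun u => lc_sqnorm (W u) o) s (2 * - tdot (G s) (K s)).
Proof.
move=> rc; case: o => [c|] /=; last by move=> _; apply: row_sqnorm_deriv.
by rewrite inE /= (mem_map Some_inj) mem_enum => cnu; apply: col_sqnorm_deriv (rc c cnu).
Qed.

(* all the squared norms in LC(nu, r) have the same derivative *)
Lemma lc_sqnorm_sub_const o o' t :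
  (forall c, c \in children T nu -> (r < rkP D T Rk c)%N) ->
  o \in lc_index -> o' \in lc_index -> 0 <= t ->
  lc_sqnorm (W t) o - lc_sqnorm (W t) o' = lc_sqnorm (W 0) o - lc_sqnorm (W 0) o'.
Proof.
move=> rc o_lc o'_lc t0.
apply: (diff_nonneg0_const (f := fun u => lc_sqnorm (W u) o - lc_sqnorm (W u) o')) => //.
move=> u /andP[u0 _].
exact: diff_nonneg_eq (fun=> erefl) (subrr _)
  (diff_nonnegB (lc_sqnorm_deriv rc o_lc u0) (lc_sqnorm_deriv rc o'_lc u0)).
Qed.

Lemma sigma_deriv t : 0 <= t -> sigma (W t) nu r != 0 ->
  diff_nonneg (fun u => sigma (W u) nu r) t
    (sigma (W t) nu r ^+ 2 * tdot (topp (G t)) (Etens (W t) nu r) *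
     \sum_(x <- lc_sqnorms (W t) nu r) x^-1).
Proof.
move=> t0 s0; have rc c := sigma_neq0_col (c := c) s0.
have := diff_nonneg_prod_sqrt (c := - tdot (G t) (K t)) (s := lc_index)
  (q := fun o u => lc_sqnorm (W u) o)
  (fun o o_lc => conj (sigma_neq0_lc s0 o_lc) (lc_sqnorm_deriv rc o_lc t0)).
apply: diff_nonneg_eq => [u|]; first by rewrite sigma_prod_sqrt.
have -> : tdot (topp (G t)) (Etens (W t) nu r) = (sigma (W t) nu r)^-1 * - tdot (G t) (K t).
  rewrite /Etens (negbTE s0) mulrN -tdotZr /tdot -sumrN; apply: eq_bigr => i _.
  by rewrite (Etens_local HT nuT nu_int s0) ?subsetT // /topp /K /at_root mulNr.
rewrite lc_sqnormsE big_map.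
transitivity (sigma (W t) nu r * - tdot (G t) (K t) *
              \sum_(o <- lc_index) (lc_sqnorm (W t) o)^-1); first by rewrite sigma_prod_sqrt.
by field.
Qed.

Lemma lc_sqnorms_close t x y : interior T nu -> 0 <= t -> sigma (W t) nu r != 0 ->
  x \in lc_sqnorms (W t) nu r -> y \in lc_sqnorms (W t) nu r ->
  `|x - y| <= unbalancedness (W 0).
Proof.
move=> nuI t0 s0; have rc c := sigma_neq0_col (c := c) s0.
rewrite lc_sqnormsE => /mapP[o o_lc ->] /mapP[o' o'_lc ->].
by rewrite lc_sqnorm_sub_const //; apply: (le_unbalancedness nuI rnu); rewrite lc_sqnormsE map_f.
Qed.

End LocalComponent.

End GradientFlow.

Unset Implicit Arguments.

Theorem theorem2 (R : realType) (N : nat) (D : 'I_N -> nat)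
    (T : {set {set 'I_N}}) (Rk : {set 'I_N} -> nat)
    (L : tensor R D -> R) (gradL : tensor R D -> tensor R D)
    (W : R -> Weights R D T Rk) (eps : R) :
  (forall n, (0 < D n)%N) ->
  is_mode_tree T ->
  (forall nu, interior T nu -> (0 < Rk nu)%N) ->
  (forall X, 0 <= L X) ->
  is_gradient L gradL ->
  locally_lipschitz gradL ->
  gradient_flow L W ->
  0 <= eps ->
  unbalancedness (W 0) = eps ->
  forall (nu : {set 'I_N}) (r : nat) (t : R),
    interior T nu -> (r < rk D Rk nu)%N -> 0 <= t ->
    0 < sigma (W t) nu r ->
    let Lnu := (#|children T nu| + 1)%N in
    let s := sigma (W t) nu r in
    let g := tdot (topp (gradL (endT (W t)))) (Etens (W t) nu r) in
    let lo := s ^+ 2 / (powR s (2 / Lnu%:R) + eps) * Lnu%:R * g in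
    let hi := (powR s (2 / Lnu%:R) + eps) ^+ (Lnu - 1) * Lnu%:R * g in
    exists d : R,
      has_deriv_nonneg (fun u => sigma (W u) nu r) t d /\
      (if 0 <= g then lo <= d <= hi else hi <= d <= lo).
Proof.
move=> _ HT _ _ HG _ GF _ unb0 nu r t nuI rnu t0 s_gt0 Lnu s g lo hi.
have /andP[nuT /leaf_of_card nu_int] := nuI.
have s0 : s != 0 by rewrite gt_eqF.
pose xs := lc_sqnorms (W t) nu r.
exists (s ^+ 2 * g * \sum_(x <- xs) x^-1); split.
  exact/diff_nonnegP/(sigma_deriv HT HG GF nuT nu_int rnu t0 s0).
have xs_gt0 x : x \in xs -> 0 < x.
  by rewrite /xs lc_sqnormsE => /mapP[o o_lc ->]; apply: sigma_neq0_lc.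
have xs_close x y : x \in xs -> y \in xs -> `|x - y| <= eps.
  by rewrite -unb0; apply: (lc_sqnorms_close HT HG GF nuT nu_int rnu nuI t0 s0).
have prod_xs : \prod_(x <- xs) x = s ^+ 2 := prod_lc_sqnorms _ _ _.
have size_xs : size xs = Lnu := size_lc_sqnorms _ _ _.
have xs_neq0 : xs != [::] by [].
have lo_S := size_div_le_sum_inv s_gt0 xs_gt0 xs_close prod_xs xs_neq0.
have S_hi := sqr_mul_sum_inv_le s_gt0 xs_gt0 xs_close prod_xs xs_neq0.
rewrite size_xs in lo_S S_hi.
have -> : lo = s ^+ 2 * (Lnu%:R / (powR s (2 / Lnu%:R) + eps)) * g by rewrite /lo; ring.
have -> : hi = Lnu%:R * (powR s (2 / Lnu%:R) + eps) ^+ (Lnu - 1) * g.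
  by rewrite /hi [_ ^+ _ * _]mulrC.
exact: bounds_by_sign (exprn_gt0 2 s_gt0) lo_S S_hi.
Qed.
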